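(* Let $k$ be an algebraically closed field complete with respect to a nontrivial non-Archimedean absolute value, with residue field $\tilde k$ of characteristic $p > 0$. Let $\varphi \in k(z)$ be a nonconstant rational function with good reduction such that all of the critical points of $\varphi$ have the same image in $\mathbb{P}^1(\tilde k)$ under the reduction map. Then $\deg(\varphi) \equiv 0$ or $1 \pmod p$.
   Context: $\mathcal{O}_k = \{x \in k : |x| \leq 1\}$, $\mathfrak{m} = \{x : |x| < 1\}$, $\tilde k = \mathcal{O}_k/\mathfrak{m}$. The reduction map $\mathrm{red} : \mathbb{P}^1(k) \to \mathbb{P}^1(\tilde k)$ sends $x \in \mathcal{O}_k$ to $x \bmod \mathfrak{m}$ and all other points to $\infty$. Write $\varphi = f/g$ with $f, g \in \mathcal{O}_k[z]$ having no common root and with some coefficient of $f$ or $g$ of absolute value $1$; let $\tilde f, \tilde g \in \tilde k[z]$ be their reductions. The reduction $\tilde\varphi$ is $\tilde f/\tilde g$ if $\tilde g \neq 0$ and the constant $\infty$ otherwise. $\varphi$ has good reduction if $\deg(\varphi) = \deg(\tilde \varphi)$. Critical points of $\varphi$ are the points $x \in \mathbb{P}^1(k)$ at which the derivative of $\sigma \circ \varphi$ (in a local coordinate at $x$, i.e. $z$ if $x$ finite and $1/z$ if $x=\infty$) vanishes, for a fractional linear $\sigma$ with $\sigma(\varphi(x)) \neq \infty$. *)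

From HB Require Import structures.
From mathcomp Require Import all_boot all_order all_algebra.
From mathcomp Require Import reals.
Set Implicit Arguments. Unset Strict Implicit. Unset Printing Implicit Defensive.
Import Order.TTheory GRing.Theory Num.Theory.
Local Open Scope ring_scope.

Definition nonarch_abs (R : realType) (k : fieldType) (abs : k -> R) : Prop :=
  [/\ forall x, 0 <= abs x,
      forall x, abs x = 0 <-> x = 0,
      forall x y, abs (x * y) = abs x * abs y,
      forall x y, abs (x + y) <= Num.max (abs x) (abs y)
    & exists x, abs x != 0 /\ abs x != 1].

Definition abs_complete (R : realType) (k : fieldType) (abs : k -> R) : Prop :=
  forall u : nat -> k,
    (forall e : R, 0 < e -> exists N, forall m n, (N <= m)%N -> (N <= n)%N ->
        abs (u m - u n) < e) ->
    exists l, forall e : R, 0 < e -> exists N, forall n, (N <= n)%N ->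
        abs (u n - l) < e.

(* red : k -> kt restricted to O_k = {|x| <= 1} is a surjective ring
   morphism onto kt with kernel m = {|x| < 1}; i.e. kt is (isomorphic to)
   the residue field O_k / m and red is the quotient map. *)
Definition residue_map (R : realType) (k kt : fieldType) (abs : k -> R)
    (red : k -> kt) : Prop :=
  [/\ forall x y, abs x <= 1 -> abs y <= 1 -> red (x + y) = red x + red y,
      forall x y, abs x <= 1 -> abs y <= 1 -> red (x * y) = red x * red y,
      red 1 = 1,
      forall x, abs x <= 1 -> (red x == 0) = (abs x < 1)
    & forall y : kt, exists x, abs x <= 1 /\ red x = y].

(* Reduction map P^1(k) -> P^1(kt); P^1 is [option _], [None] = infinity. *)
Definition red_pt (R : realType) (k kt : fieldType) (abs : k -> R)
    (red : k -> kt) (x : option k) : option kt :=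
  match x with
  | Some z => if abs z <= 1 then Some (red z) else None
  | None => None
  end.

(* Degree of the rational function f/g (the constant infinity if g = 0):
   max of the degrees of numerator and denominator in lowest terms. *)
Definition rdeg (F : fieldType) (f g : {poly F}) : nat :=
  if g == 0 then 0%N
  else maxn (size (f %/ gcdp f g)).-1 (size (g %/ gcdp f g)).-1.

(* w^d p(1/w), for deg p <= d. *)
Definition revd (F : fieldType) (d : nat) (p : {poly F}) : {poly F} :=
  \poly_(i < d.+1) p`_(d - i).

(* The derivative of N/D vanishes at x, where D(x) <> 0:
   (N/D)' = (N' D - N D') / D^2. *)
Definition deriv_vanishes (F : fieldType) (N D : {poly F}) (x : F) : Prop :=
  D.[x] != 0 /\ (N^`() * D - N * D^`()).[x] = 0.

(* x in P^1(k) is a critical point of phi = f/g: for some fractional linear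
   sigma(w) = (a w + b)/(c w + d) with sigma(phi(x)) <> infinity, the
   derivative of sigma o phi = (a f + b g)/(c f + d g) in the local coordinate
   at x (z if x finite, 1/z if x = infinity) vanishes. *)
Definition critical_point (F : fieldType) (f g : {poly F}) (x : option F) : Prop :=
  exists a b c d : F, a * d - b * c != 0 /\
    let N := a *: f + b *: g in
    let D := c *: f + d *: g in
    match x with
    | Some z => deriv_vanishes N D z
    | None => deriv_vanishes (revd (rdeg f g) N) (revd (rdeg f g) D) 0
    end.

From HB Require Import structures.
From mathcomp Require Import all_boot all_order all_algebra.
From mathcomp Require Import reals.
From mathcomp Require Import ring zify.
Import Order.TTheory GRing.Theory Num.Theory.
Local Open Scope ring_scope.

(** The Wronskian [W = f' g - f g'] of [phi = f/g] (degree [d]) vanishes exactly at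
    the finite critical points of [phi], and its coefficient of degree [2d - 2] vanishes
    exactly when infinity is critical.  If some critical point is integral, then every
    root of [W] is integral with the same reduction [a], and infinity is not critical,
    so [W] has degree [2d - 2] and reduces to [c (z - a)^(2d - 2)].  Otherwise every
    root of [W] lies outside the closed unit disc and [W] reduces to a constant.  Good
    reduction makes the reduced Wronskian that of coprime [f~, g~] of degree [d], and
    then [(z - a) W~' = m W~] with [m = 0] or [m = 2d - 2] forces [d (d - 1) = m d] in
    the residue field; in both cases [p] divides [d (d - 1)]. *)

Lemma modn_succ_of_dvdn_mul (p n : nat) : prime p -> (p %| n.+1 * n)%N ->
  (n.+1 %% p == 0)%N || (n.+1 %% p == 1)%N.
Proof.
move=> p_prime; rewrite Euclid_dvdM // => /orP[p_dvd|/dvdnP[q ->]].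
  by apply/orP; left.
by rewrite -addn1 modnMDl modn_small ?prime_gt1 ?orbT.
Qed.

Section PolyCoefficients.
Context {K : nzRingType}.
Implicit Types p q : {poly K}.

Lemma coefM_range {p q n lo hi m} : (size p <= hi)%N -> (size q <= m)%N ->
  (lo <= hi <= n.+1)%N -> (m + lo <= n.+1)%N ->
  (p * q)`_n = \sum_(lo <= l < hi) p`_l * q`_(n - l).
Proof.
move=> /leq_sizeP p0 /leq_sizeP q0 /andP[lohi hin] mlo.
rewrite coefM -(big_mkord xpredT (fun l => p`_l * q`_(n - l))).
rewrite (big_cat_nat (n := lo)) ?(leq_trans lohi) //= (big_cat_nat (m := lo) (n := hi)) //=.
rewrite [X in X + _](eq_big_nat _ _ (F2 := fun=> 0)) ?big1_eq ?add0r; last first.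
  by move=> l /andP[_ llo]; rewrite q0 ?mulr0 //; lia.
rewrite [X in _ + X](eq_big_nat _ _ (F2 := fun=> 0)) ?big1_eq ?addr0 // => l /andP[hil _].
by rewrite p0 ?mul0r.
Qed.

Lemma coefM_top p q i j : (size p <= i.+2)%N -> (size q <= j.+2)%N ->
  (p * q)`_(i + j).+2 = p`_i.+1 * q`_j.+1.
Proof.
move=> sp sq; rewrite (coefM_range (lo := i.+1) sp sq) ?big_nat1; [|lia|lia].
by rewrite subSS -addnS addKn.
Qed.

Lemma coefM_subtop p q i j : (size p <= i.+2)%N -> (size q <= j.+2)%N ->
  (p * q)`_(i + j).+1 = p`_i * q`_j.+1 + p`_i.+1 * q`_j.
Proof.
move=> sp sq; rewrite (coefM_range (lo := i) sp sq); [|lia|lia].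
by rewrite big_ltn // big_nat1 subSS addKn -addnS addKn.
Qed.

Lemma size_deriv_leq p : (size p^`() <= (size p).-1)%N.
Proof.
have [->|p_neq0] := eqVneq p 0; first by rewrite deriv0 size_poly0.
by have := lt_size_deriv p_neq0; case: (size p).
Qed.

Lemma leq_size_deriv {p : {poly K}} {m : nat} :
  (size p <= m.+1)%N -> (size p^`() <= m)%N.
Proof. by move=> sp; apply: (leq_trans (size_deriv_leq p)); case: size sp. Qed.

Lemma coef_size_neq0 {p : {poly K}} {n : nat} : size p = n.+1 -> p`_n != 0.
Proof.
move=> sp; have := lead_coef_eq0 p; rewrite lead_coefE sp /= => ->.
by rewrite -size_poly_eq0 sp.
Qed.

Lemma leq_size_mul p q a b : (size p <= a.+1)%N -> (size q <= b.+1)%N ->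
  (size (p * q)%R <= (a + b).+1)%N.
Proof.
move=> sp sq; apply: (leq_trans (size_polyMleq p q)).
by rewrite -subn1 leq_subLR add1n -addSn -addnS leq_add.
Qed.

Lemma gt_size_coef_neq0 p i : p`_i != 0 -> (i < size p)%N.
Proof. by apply: contraNT; rewrite -leqNgt => /leq_sizeP->. Qed.

End PolyCoefficients.

Definition wronskian {K : nzRingType} (F G : {poly K}) := F^`() * G - F * G^`().

Section Wronskian.
Context {K : fieldType}.
Implicit Types F G : {poly K}.

Lemma wronskianC F G : wronskian G F = - wronskian F G.
Proof. by rewrite /wronskian opprB [G * _]mulrC [G^`() * _]mulrC. Qed.

Lemma deriv_wronskian F G : (wronskian F G)^`() = F^`()^`() * G - F * G^`()^`().
Proof. by rewrite /wronskian derivB !derivM addrKA. Qed.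

Lemma coef_wronskian_top n F G : (size F <= n.+3)%N -> (size G <= n.+3)%N ->
  (wronskian F G)`_(n + n).+3 = 0.
Proof.
move=> sF sG; have sF' := leq_size_deriv sF; have sG' := leq_size_deriv sG.
rewrite coefB -addnS [F * _]mulrC !coefM_top // !coef_deriv.
by rewrite !mulrnAl mulrC subrr.
Qed.

Lemma coef_wronskian_subtop n F G : (size F <= n.+3)%N -> (size G <= n.+3)%N ->
  (wronskian F G)`_(n + n).+2 = F`_n.+2 * G`_n.+1 - F`_n.+1 * G`_n.+2.
Proof.
move=> sF sG; have sF' := leq_size_deriv sF; have sG' := leq_size_deriv sG.
rewrite coefB -addnS [F * _]mulrC !coefM_subtop // !coef_deriv !mulrSr.
ring.
Qed.

Lemma size_wronskian_leq n F G : (size F <= n.+3)%N -> (size G <= n.+3)%N ->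
  (size (wronskian F G) <= (n + n).+3)%N.
Proof.
move=> sF sG; apply/leq_sizeP => i; rewrite leq_eqVlt => /predU1P[<-|lt_i].
  exact: coef_wronskian_top.
apply/leq_sizeP: i lt_i.
have sF' := leq_size_deriv sF; have sG' := leq_size_deriv sG.
have -> : (n + n).+4 = (n.+1 + n.+2).+1 by rewrite addSn !addnS.
apply: (leq_trans (size_polyD _ _)).
by rewrite size_polyN geq_max leq_size_mul // addnC leq_size_mul.
Qed.

Lemma XsubC_mul_deriv_scale_exp (c a : K) m :
  ('X - a%:P) * (c *: ('X - a%:P) ^+ m)^`() = m%:R *: (c *: ('X - a%:P) ^+ m).
Proof.
rewrite derivZ deriv_exp derivXsubC mul1r -!mul_polyC polyC_natr.
by case: m => [|m]; rewrite ?mulr0n ?mulr0 ?mul0r // exprS; ring.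
Qed.

Lemma wronskian_Euler_coef {F G} {a : K} {m n : nat} : coprimep F G -> size F = n.+2 ->
  ('X - a%:P) * (wronskian F G)^`() = m%:R *: wronskian F G ->
  (n.+1 * n)%:R = (m * n.+1)%:R :> K.
Proof.
move=> copFG sF Euler.
(* [G T(F) - F T(G)] is the Euler identity, so [F] divides [T(F)], of smaller size. *)
pose T H := ('X - a%:P) * H^`()^`() - m%:R *: H^`().
have : G * T F - F * T G = ('X - a%:P) * (wronskian F G)^`() - m%:R *: wronskian F G.
  by rewrite deriv_wronskian /wronskian /T -!mul_polyC; ring.
rewrite Euler subrr => /eqP; rewrite subr_eq0 => /eqP TE.
have dvdF : F %| T F by rewrite -(Gauss_dvdpr _ copFG) TE dvdp_mulr.
have sF' : (size F^`() <= n.+1)%N by rewrite leq_size_deriv ?sF.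
have sF'' : (size F^`()^`() <= n)%N by rewrite leq_size_deriv.
have size_TF : (size (T F) <= n.+1)%N.
  apply: (leq_trans (size_polyD _ _)); rewrite size_polyN geq_max.
  rewrite (leq_trans (size_scale_leq _ _)) // andbT.
  by apply: (leq_trans (size_polyMleq _ _)); rewrite size_XsubC.
have TF0 : T F = 0.
  by apply/eqP/negPn/negP => /dvdp_leq/(_ dvdF); rewrite sF leqNgt ltnS size_TF.
have XF''n : ('X * F^`()^`())`_n = F`_n.+1 *+ n.+1 *+ n.
  by rewrite coefXM; case: n {sF sF' sF'' size_TF} => [|n] //=; rewrite ?mulr0n // !coef_deriv.
have := congr1 (coefp n) TF0; rewrite /= /T coefB coefZ mulrBl coefB XF''n coefCM.
rewrite [F^`()^`()`_n](leq_sizeP _ _ sF'') // coef_deriv coef0 mulr0 subr0.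
move/eqP; rewrite subr_eq0 => /eqP top_coef.
apply: (mulfI (coef_size_neq0 sF)).
by rewrite !mulr_natr mulrnA top_coef mulnC mulrnA mulr_natl.
Qed.

Lemma wronskian_eq_scale_exp_dvdn (p : nat) F G (c a : K) m n :
  p \in [pchar K] -> coprimep F G -> (size F = n.+2 \/ size G = n.+2) ->
  wronskian F G = c *: ('X - a%:P) ^+ m -> (m = 0 \/ m = n.*2)%N ->
  (p %| n.+1 * n)%N.
Proof.
move=> pchar_p copFG sFG WE m_cases.
have Euler_eq : (n.+1 * n)%:R = (m * n.+1)%:R :> K.
  case: sFG => [sF|sG].
    apply: (wronskian_Euler_coef (a := a) copFG sF).
    by rewrite WE XsubC_mul_deriv_scale_exp.
  have copGF : coprimep G F by rewrite coprimep_sym.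
  apply: (wronskian_Euler_coef (a := a) copGF sG).
  by rewrite wronskianC WE -scaleNr XsubC_mul_deriv_scale_exp.
rewrite (dvdn_pcharf pchar_p); apply/eqP.
case: m_cases Euler_eq => ->; first by rewrite mul0n.
rewrite (_ : n.*2 * n.+1 = n.+1 * n + n.+1 * n)%N; last by lia.
by rewrite natrD -{1}[(n.+1 * n)%:R]addr0 => /addrI/esym.
Qed.

End Wronskian.

Definition deriv_vanishes_at {K : fieldType} (d : nat) (N D : {poly K}) (x : option K) :=
  match x with
  | Some z => deriv_vanishes N D z
  | None => deriv_vanishes (revd d N) (revd d D) 0
  end.

Section CriticalPoints.
Context {K : fieldType}.
Implicit Types (f g N D : {poly K}) (x : option K).

Lemma critical_point_id f g x : deriv_vanishes_at (rdeg f g) f g x -> critical_point f g x.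
Proof.
exists 1, 0, 0, 1; rewrite mulr1 mulr0 subr0 oner_neq0 /=.
by rewrite !scale1r !scale0r addr0 add0r.
Qed.

Lemma critical_point_swap f g x : deriv_vanishes_at (rdeg f g) g f x -> critical_point f g x.
Proof.
exists 0, 1, 1, 0; rewrite mulr0 mulr1 sub0r oppr_eq0 oner_neq0 /=.
by rewrite !scale1r !scale0r addr0 add0r.
Qed.

Lemma deriv_vanishes0 N D : D`_0 != 0 -> N`_1 * D`_0 = N`_0 * D`_1 -> deriv_vanishes N D 0.
Proof.
move=> D0 ND; split; first by rewrite horner_coef0.
by rewrite horner_coef0 coefB !coef0M !coef_deriv ND subrr.
Qed.

Lemma coef_revd d N i : (i <= d)%N -> (revd d N)`_i = N`_(d - i).
Proof. by move=> le_id; rewrite coef_poly ltnS le_id. Qed.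

Lemma critical_point_wronskian_root f g z :
  ~ (root f z /\ root g z) -> root (wronskian f g) z -> critical_point f g (Some z).
Proof.
move=> no_common /rootP Wz; have [gz0|gz_neq0] := eqVneq g.[z] 0.
  have fz_neq0 : f.[z] != 0 by apply/eqP => fz0; apply: no_common; split; apply/rootP.
  by apply: critical_point_swap; split; rewrite // -/(wronskian g f) wronskianC hornerN Wz oppr0.
by apply: critical_point_id; split.
Qed.

Lemma critical_point_infty {f g n} : rdeg f g = n.+1 -> (f`_n.+1 != 0 \/ g`_n.+1 != 0) ->
  f`_n.+1 * g`_n = f`_n * g`_n.+1 -> critical_point f g None.
Proof.
move=> deg_fg lead_neq0 top_eq.
have [g_lead0|g_lead_neq0] := eqVneq g`_n.+1 0.
  apply: critical_point_swap; rewrite /= deg_fg.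
  apply: deriv_vanishes0; rewrite !coef_revd ?subn0 ?subn1 //.
    by case: lead_neq0; rewrite // g_lead0 eqxx.
  by rewrite mulrC top_eq mulrC.
apply: critical_point_id; rewrite /= deg_fg.
by apply: deriv_vanishes0; rewrite !coef_revd ?subn0 ?subn1 // top_eq.
Qed.

End CriticalPoints.

Lemma rdeg_coprimep {K : fieldType} {f g : {poly K}} : coprimep f g -> g != 0 ->
  rdeg f g = maxn (size f).-1 (size g).-1.
Proof.
rewrite coprimep_def => /eqP gcd1 g_neq0.
have gcd_neq0 : gcdp f g != 0 by rewrite -size_poly_eq0 gcd1.
by rewrite /rdeg (negPf g_neq0) !size_divp // gcd1 !subn0.
Qed.

Lemma coprimep_no_common_root {K : closedFieldType} {f g : {poly K}} :
  (forall z, ~ (root f z /\ root g z)) -> coprimep f g.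
Proof.
move=> no_common; rewrite coprimep_def; apply/negPn/negP => /closed_rootP[z gcd_z].
by apply: (no_common z); split; [exact: root_dvdp (dvdp_gcdl f g) gcd_z|
  exact: root_dvdp (dvdp_gcdr f g) gcd_z].
Qed.

Lemma rdeg_coprimep_size {K : fieldType} {f g : {poly K}} {n : nat} :
  (size f <= n.+1)%N -> (size g <= n.+1)%N -> rdeg f g = n -> (0 < n)%N ->
  coprimep f g /\ (size f = n.+1 \/ size g = n.+1).
Proof.
rewrite /rdeg coprimep_def => sf sg; have [->|g_neq0] := eqVneq g 0; first by move=> <-.
have gcd_neq0 : gcdp f g != 0 by rewrite gcdp_eq0 negb_and g_neq0 orbT.
have : (0 < size (gcdp f g))%N by rewrite size_poly_gt0.
rewrite !size_divp //; move: (size (gcdp f g)) (size f) (size g) sf sg => s a b.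
by case: (ltngtP s 1) => [||->]; lia.
Qed.

Lemma prod_XsubC_scale {K : fieldType} (rs : seq K) : (forall r, r \in rs -> r != 0) ->
  \prod_(r <- rs) ('X - r%:P) = \prod_(r <- rs) (- r) *: \prod_(r <- rs) (1 - r^-1 *: 'X).
Proof.
move=> rs_neq0; rewrite -scaler_prod; apply: eq_big_seq => r /rs_neq0 r_neq0.
by rewrite scalerBr scalerA mulNr mulfV // scaleN1r alg_polyC polyCN opprK addrC.
Qed.

Section Reduction.
Context {R : realType} {k kt : fieldType} {abs : k -> R} {red : k -> kt}.
Hypotheses (abs_nonarch : nonarch_abs abs) (red_residue : residue_map abs red).
Implicit Types (f g P Q : {poly k}) (c x : k).

Lemma abs0 : abs 0 = 0.
Proof. by case: abs_nonarch => _ abs_eq0 _ _ _; apply/abs_eq0. Qed.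

Lemma abs1 : abs 1 = 1.
Proof.
case: abs_nonarch => _ abs_eq0 absM _ _.
have abs1_neq0 : abs 1 != 0 by apply/eqP => /abs_eq0/eqP; rewrite oner_eq0.
by apply: (mulIf abs1_neq0); rewrite -absM !mul1r.
Qed.

Lemma absN x : abs (- x) = abs x.
Proof.
case: abs_nonarch => abs_ge0 _ absM _ _.
have : abs (-1) ^+ 2 == 1 by rewrite expr2 -absM mulrNN mulr1 abs1.
rewrite sqrf_eq1 => /orP[/eqP absN1|/eqP absN1]; first by rewrite -mulN1r absM absN1 mul1r.
by have := abs_ge0 (-1); rewrite absN1 ler0N1.
Qed.

Lemma absV x : abs x^-1 = (abs x)^-1.
Proof.
have [->|x_neq0] := eqVneq x 0; first by rewrite invr0 abs0 invr0.
case: abs_nonarch => _ _ absM _ _.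
by apply/esym/mulr1_eq; rewrite -absM mulfV // abs1.
Qed.

Definition integral : {pred k} := fun x => abs x <= 1.

Fact integral_subring_closed : subring_closed integral.
Proof.
case: abs_nonarch => abs_ge0 _ absM absD _.
split=> [|x y|x y]; rewrite !unfold_in /=.
- by rewrite abs1.
- by move=> x_int y_int; rewrite (le_trans (absD _ _)) // ge_max x_int absN.
- by move=> x_int y_int; rewrite absM -(mulr1 1) ler_pM.
Qed.

HB.instance Definition _ := GRing.isSubringClosed.Build k integral
  integral_subring_closed.

Lemma redD : {in integral &, {morph red : x y / x + y}}.
Proof. by case: red_residue. Qed.

Lemma redM : {in integral &, {morph red : x y / x * y}}.
Proof. by case: red_residue. Qed.

Lemma red1 : red 1 = 1.
Proof. by case: red_residue. Qed.

Lemma red_eq0 x : x \in integral -> (red x == 0) = (abs x < 1).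
Proof. by case: red_residue => _ _ _ + _; apply. Qed.

Lemma red0 : red 0 = 0.
Proof. by apply: (addrI (red 0)); rewrite -redD ?rpred0 // !addr0. Qed.

Lemma redN : {in integral, {morph red : x / - x}}.
Proof.
by move=> x x_int; apply: (addrI (red x)); rewrite -redD ?rpredN // !subrr red0.
Qed.

Lemma redMn n : {in integral, {morph red : x / x *+ n}}.
Proof.
move=> x x_int; elim: n => [|n IHn]; first by rewrite !mulr0n red0.
by rewrite !mulrS redD ?rpredMn // IHn.
Qed.

Lemma red_sum (I : Type) (r : seq I) (F : I -> k) : (forall i, F i \in integral) ->
  red (\sum_(i <- r) F i) = \sum_(i <- r) red (F i).
Proof.
move=> F_int; elim: r => [|i r IHr]; first by rewrite !big_nil red0.
by rewrite !big_cons redD ?rpred_sum // IHr.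
Qed.

Local Notation redp := (map_poly red).

Lemma coef_redp P i : (redp P)`_i = red P`_i.
Proof. exact: coef_map_id0 red0. Qed.

Lemma redpB : {in polyOver integral &, {morph redp : P Q / P - Q}}.
Proof.
move=> P Q /polyOverP P_int /polyOverP Q_int; apply/polyP => i.
by rewrite coefB !coef_redp coefB redD ?rpredN // redN.
Qed.

Lemma redpM : {in polyOver integral &, {morph redp : P Q / P * Q}}.
Proof.
move=> P Q /polyOverP P_int /polyOverP Q_int; apply/polyP => i.
rewrite coef_redp !coefM red_sum => [|j]; last by rewrite rpredM.
by apply: eq_bigr => j _; rewrite redM // !coef_redp.
Qed.

Lemma redpZ c P : c \in integral -> P \is a polyOver integral ->
  redp (c *: P) = red c *: redp P.
Proof.
move=> c_int /polyOverP P_int; apply/polyP => i.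
by rewrite coef_redp !coefZ redM // coef_redp.
Qed.

Lemma redp_deriv : {in polyOver integral, {morph redp : P / P^`()}}.
Proof.
move=> P /polyOverP P_int; apply/polyP => i.
by rewrite coef_redp !coef_deriv redMn // coef_redp.
Qed.

Lemma redpC c : redp c%:P = (red c)%:P.
Proof. by apply/polyP => i; rewrite coef_redp !coefC; case: eqP; rewrite ?red0. Qed.

Lemma redpX : redp 'X = 'X.
Proof.
by apply/polyP => i; rewrite coef_redp !coefX; case: eqP; rewrite ?red1 ?red0.
Qed.

Lemma redpXsubC c : c \in integral -> redp ('X - c%:P) = 'X - (red c)%:P.
Proof. by move=> c_int; rewrite redpB ?polyOverX ?polyOverC // redpX redpC. Qed.

Lemma redp_prod (I : eqType) (r : seq I) (F : I -> {poly k}) :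
  (forall i, i \in r -> F i \is a polyOver integral) ->
  redp (\prod_(i <- r) F i) = \prod_(i <- r) redp (F i).
Proof.
elim: r => [|i r IHr] F_int; first by rewrite !big_nil -polyC1 redpC red1.
have F_int' j : j \in r -> F j \is a polyOver integral.
  by move=> j_r; apply: F_int; rewrite in_cons j_r orbT.
rewrite !big_cons redpM ?IHr ?F_int ?mem_head //.
by rewrite big_seq; apply: rpred_prod => j /F_int'.
Qed.

Lemma redp_wronskian f g : f \is a polyOver integral -> g \is a polyOver integral ->
  redp (wronskian f g) = wronskian (redp f) (redp g).
Proof.
move=> f_int g_int; have f'_int := polyOver_deriv f_int; have g'_int := polyOver_deriv g_int.
by rewrite redpB ?rpredM // !redpM // !redp_deriv.
Qed.

Lemma red_ptE x : red_pt abs red (Some x) = if x \in integral then Some (red x) else None.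
Proof. by []. Qed.

Lemma redp_roots_in_disc P (rs : seq k) a :
  P \is a polyOver integral -> P = lead_coef P *: \prod_(r <- rs) ('X - r%:P) ->
  (forall r, r \in rs -> r \in integral /\ red r = a) ->
  redp P = red (lead_coef P) *: ('X - a%:P) ^+ size rs.
Proof.
move=> P_int P_split roots_in; rewrite {1}P_split redpZ; last 2 first.
- by rewrite lead_coefE (polyOverP P_int).
- by rewrite big_seq rpred_prod // => r /roots_in[r_int _]; rewrite polyOverXsubC.
rewrite redp_prod => [|r /roots_in[r_int _]]; last by rewrite polyOverXsubC.
rewrite (eq_big_seq (fun=> 'X - a%:P)) => [|r /roots_in[r_int <-]]; last exact: redpXsubC.
by rewrite big_const_seq count_predT iter_mulr_1.
Qed.

Lemma redp_roots_outside_disc {P} {rs : seq k} :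
  P \is a polyOver integral -> P = lead_coef P *: \prod_(r <- rs) ('X - r%:P) ->
  (forall r, r \in rs -> r \notin integral) -> redp P = (red P`_0)%:P.
Proof.
move=> P_int P_split roots_out.
have gt1 r : r \in rs -> 1 < abs r by move/roots_out; rewrite unfold_in /= -ltNge.
have r_neq0 r : r \in rs -> r != 0.
  by move/gt1; apply: contraTneq => ->; rewrite abs0 ltr10.
have inv_lt1 r : r \in rs -> abs r^-1 < 1.
  by move/gt1 => gt1_r; rewrite absV invf_lt1 // (lt_trans ltr01).
have inv_int r : r \in rs -> r^-1 \in integral by move/inv_lt1/ltW.
set Q := \prod_(r <- rs) (1 - r^-1 *: 'X).
have Q0 : Q`_0 = 1.
  by rewrite coef0_prod big1 // => r _; rewrite coefB coefZ coefX coef1 mulr0 subr0.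
have [c PE] : exists c, P = c *: Q.
  by exists (lead_coef P * \prod_(r <- rs) - r); rewrite {1}P_split prod_XsubC_scale // scalerA.
have {c}PE : P = P`_0 *: Q by rewrite {2}PE coefZ Q0 mulr1.
have factor_int r : r \in rs -> 1 - r^-1 *: 'X \is a polyOver integral.
  by move=> r_rs; rewrite rpredB ?rpred1 ?polyOverZ ?polyOverX ?inv_int.
have Q_int : Q \is a polyOver integral by rewrite /Q big_seq; apply: rpred_prod.
have redpQ : redp Q = 1.
  rewrite redp_prod // big1_seq // => r /andP[_ r_rs].
  have red_inv0 : red r^-1 = 0 by apply/eqP; rewrite red_eq0 ?inv_int ?inv_lt1.
  rewrite redpB ?rpred1 ?polyOverZ ?polyOverX ?inv_int // redpZ ?polyOverX ?inv_int //.
  by rewrite red_inv0 scale0r subr0 -polyC1 redpC red1.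
by rewrite {1}PE redpZ ?(polyOverP P_int) // redpQ alg_polyC.
Qed.

Lemma redp_wronskian_eq_scale_exp {f g n} {rs : seq k} :
  f \is a polyOver integral -> g \is a polyOver integral ->
  (forall z, ~ (root f z /\ root g z)) ->
  rdeg f g = n.+2 -> (size f <= n.+3)%N -> (size g <= n.+3)%N ->
  (f`_n.+2 != 0 \/ g`_n.+2 != 0) ->
  wronskian f g = lead_coef (wronskian f g) *: \prod_(r <- rs) ('X - r%:P) ->
  (forall x y : option k, critical_point f g x -> critical_point f g y ->
     red_pt abs red x = red_pt abs red y) ->
  exists (c a : kt) m, wronskian (redp f) (redp g) = c *: ('X - a%:P) ^+ m /\
    (m = 0 \/ m = (n.+1).*2)%N.
Proof.
move=> f_int g_int no_common deg_fg sf sg lead_neq0 W_split same_red.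
rewrite -redp_wronskian //; set W := wronskian f g in W_split *.
have W_int : W \is a polyOver integral by rewrite rpredB ?rpredM ?polyOver_deriv.
have crit_root r : r \in rs -> critical_point f g (Some r).
  move=> r_rs; apply: critical_point_wronskian_root => //.
  by rewrite -/W /root W_split hornerZ mulf_eq0 -/(root _ r) root_prod_XsubC r_rs orbT.
have [/hasP[r0 r0_rs r0_int]|/hasPn roots_out] := boolP (has (fun r => r \in integral) rs).
  have roots_in r : r \in rs -> r \in integral /\ red r = red r0.
    move=> r_rs; have := same_red _ _ (crit_root r r_rs) (crit_root r0 r0_rs).
    by rewrite !red_ptE r0_int; case: ifP => // r_int [->].
  have W_top : W`_(n + n).+2 != 0.
    apply/eqP => W_top0.
    have top_eq : f`_n.+2 * g`_n.+1 = f`_n.+1 * g`_n.+2.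
      by apply/eqP; rewrite -subr_eq0 -coef_wronskian_subtop // W_top0.
    have := same_red _ _ (critical_point_infty deg_fg lead_neq0 top_eq) (crit_root r0 r0_rs).
    by rewrite red_ptE r0_int.
  have size_rs : size rs = (n.+1).*2.
    have W_neq0 : lead_coef W != 0 by rewrite lead_coef_eq0; apply: contra_neq W_top => ->; rewrite coef0.
    have sizeW : size W = (n + n).+3.
      by apply/eqP; rewrite eqn_leq size_wronskian_leq // gt_size_coef_neq0.
    move: sizeW; rewrite {1}W_split size_scale // size_prod_XsubC => -[->].
    by rewrite -addnn addSn addnS.
  exists (red (lead_coef W)), (red r0), (size rs); split; last by right.
  exact: redp_roots_in_disc.
exists (red W`_0), 0, 0%N; split; last by left.
by rewrite (redp_roots_outside_disc W_int W_split roots_out) expr0 alg_polyC.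
Qed.

End Reduction.

Arguments integral {R k} abs.

Theorem corollary1p7 (R : realType) (k : closedFieldType) (abs : k -> R)
  (kt : fieldType) (red : k -> kt) (p : nat)
  (f g : {poly k}) :
  nonarch_abs abs ->
  abs_complete abs ->
  residue_map abs red ->
  p \in [pchar kt] ->
  (forall z : k, ~ (root f z /\ root g z)) ->
  (forall i, abs f`_i <= 1) -> (forall i, abs g`_i <= 1) ->
  (exists i, abs f`_i = 1 \/ abs g`_i = 1) ->
  (0 < rdeg f g)%N ->
  rdeg (map_poly red f) (map_poly red g) = rdeg f g ->
  (forall x y : option k, critical_point f g x -> critical_point f g y ->
     red_pt abs red x = red_pt abs red y) ->
  (rdeg f g %% p == 0)%N || (rdeg f g %% p == 1)%N.
Proof.
move=> abs_nonarch _ red_residue pchar_p no_common f_bound g_bound _ deg_gt0 good_red same_red.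
have g_neq0 : g != 0 by apply: contraTneq deg_gt0 => ->; rewrite /rdeg eqxx.
have degE := rdeg_coprimep (coprimep_no_common_root no_common) g_neq0.
case deg_fg: (rdeg f g) deg_gt0 good_red degE => [|[|n]] // _ good_red degE.
  by rewrite modn_small ?prime_gt1 ?orbT // (pcharf_prime pchar_p).
have [[sf sg] top] : ((size f <= n.+3) /\ (size g <= n.+3))%N /\
    (size f = n.+3 \/ size g = n.+3) by move: (size f) (size g) degE => a b; lia.
have [copt topt] := rdeg_coprimep_size (leq_trans (size_poly _ _) sf)
  (leq_trans (size_poly _ _) sg) good_red isT.
have lead_neq0 : f`_n.+2 != 0 \/ g`_n.+2 != 0.
  by case: top => [/coef_size_neq0|/coef_size_neq0]; [left|right].
have [f_int g_int] : f \is a polyOver (integral abs) /\ g \is a polyOver (integral abs).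
  by split; apply/polyOverP.
have [rs W_split] := closed_field_poly_normal (wronskian f g).
have [c [a [m [Wred m_cases]]]] := redp_wronskian_eq_scale_exp abs_nonarch red_residue
  f_int g_int no_common deg_fg sf sg lead_neq0 W_split same_red.
apply: modn_succ_of_dvdn_mul; first exact: pcharf_prime pchar_p.
exact: wronskian_eq_scale_exp_dvdn pchar_p copt topt Wred m_cases.
Qed.
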